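(* For any graph $G$ with connected components $G_1,\dots,G_n$, we have $\lfloor \mathrm{sp}\rfloor(G)=\lfloor \mathrm{sp}\rfloor(G_1)+\cdots+\lfloor \mathrm{sp}\rfloor(G_n)$.
   Context: All graphs are finite, have at least one vertex, have no loops, and may have multiple (parallel) edges. A unique shortest path is a shortest $u$–$v$ path $P$ such that every $u$–$v$ path with the same number of vertices is identical to $P$, where two paths with different edge sequences are different even if their vertex sequences agree; a single vertex is a unique shortest path. The parade number $\mathrm{usp}(G)$ is the largest number of vertices of a unique shortest path in $G$. The spectator number is $\mathrm{sp}(G)=|V(G)|-\mathrm{usp}(G)$. A minor of $H$ is any graph obtained from $H$ by a sequence of: deleting an isolated vertex, deleting an edge, contracting an edge that has no edge parallel to it. The spectator floor $\lfloor \mathrm{sp}\rfloor(G)$ is the minimum of $\mathrm{sp}(H)$ over all graphs $H$ of which $G$ is a minor. *)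

From mathcomp Require Import all_boot.
From mathcomp Require Import boolp.
From Stdlib Require Import Relation_Operators.

Set Implicit Arguments.
Unset Strict Implicit.
Unset Printing Implicit Defensive.

(* A finite multigraph: finite vertex and edge types; every edge has an
   (arbitrarily oriented) pair of endpoints.  Parallel edges are allowed
   (distinct edges with the same endpoints). *)
Record mgraph := MGraph {
  vert : finType;
  edge : finType;
  ends : edge -> vert * vert }.

Definition incid (G : mgraph) (e : edge G) (x y : vert G) : bool :=
  (ends e == (x, y)) || (ends e == (y, x)).

Definition loopless (G : mgraph) : bool :=
  [forall e : edge G, (ends e).1 != (ends e).2].

Definition is_graph (G : mgraph) : bool := (0 < #|vert G|) && loopless G.

(* (vs, es) is a u-v path: vertex sequence vs = [v0; ..; vk] (distinct),
   edge sequence es = [e1; ..; ek] with e_i joining v_{i-1} and v_i,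
   v0 = u and vk = v. *)
Definition is_uv_path (G : mgraph) (u v : vert G)
    (vs : seq (vert G)) (es : seq (edge G)) : bool :=
  [&& size vs == (size es).+1, uniq vs, head u vs == u, last u vs == v &
      all2 (fun e p => incid e p.1 p.2) es (zip vs (behead vs))].

Definition is_usp (G : mgraph) (vs : seq (vert G)) (es : seq (edge G)) : Prop :=
  exists u v : vert G,
    [/\ is_uv_path u v vs es,
        (forall vs' es', is_uv_path u v vs' es' -> size vs <= size vs') &
        (forall vs' es', is_uv_path u v vs' es' -> size vs' = size vs ->
           vs' = vs /\ es' = es)].

(* parade number: largest number of vertices of a unique shortest path
   (a path has at most #|V| vertices) *)
Definition usp (G : mgraph) : nat :=
  \max_(k < #|vert G|.+1 | `[< exists vs es, @is_usp G vs es /\ size vs = k >]) k.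

Definition sp (G : mgraph) : nat := #|vert G| - usp G.

Definition compat (G' G : mgraph) (f : vert G' -> vert G) (g : edge G' -> edge G) :=
  forall e : edge G', incid (g e) (f (ends e).1) (f (ends e).2).

(* H' is (isomorphic to) H with the isolated vertex v deleted *)
Definition del_isolated_vertex (H H' : mgraph) : Prop :=
  exists v : vert H,
    (forall e : edge H, (ends e).1 != v /\ (ends e).2 != v) /\
    exists (f : vert H' -> vert H) (g : edge H' -> edge H),
      [/\ injective f, (forall x, x != v -> exists y, f y = x),
          (forall y, f y != v), bijective g & compat f g].

(* H' is (isomorphic to) H with the edge e0 deleted *)
Definition del_edge (H H' : mgraph) : Prop :=
  exists e0 : edge H,
    exists (f : vert H' -> vert H) (g : edge H' -> edge H),
      [/\ bijective f, injective g, (forall e, e != e0 -> exists e', g e' = e),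
          (forall e', g e' != e0) & compat f g].

(* H' is (isomorphic to) H with the edge e0 contracted, where e0 has no
   parallel edge: f merges exactly the two endpoints of e0, edges other than
   e0 survive with their endpoints mapped by f. *)
Definition contract_edge (H H' : mgraph) : Prop :=
  exists e0 : edge H,
    (forall e, e != e0 -> ~~ incid e (ends e0).1 (ends e0).2) /\
    exists (f : vert H -> vert H') (g : edge H' -> edge H),
      [/\ (forall y, exists x, f x = y),
          (forall x y, f x = f y <-> (x = y \/ incid e0 x y)),
          injective g,
          (forall e, e != e0 -> exists e', g e' = e) /\ (forall e', g e' != e0) &
          (forall e' : edge H', incid e' (f (ends (g e')).1) (f (ends (g e')).2))].

(* graph isomorphism (graphs are considered up to isomorphism) *)
Definition isomorphic (H H' : mgraph) : Prop :=
  exists (f : vert H' -> vert H) (g : edge H' -> edge H),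
    [/\ bijective f, bijective g & compat f g].

Definition minor_step (H H' : mgraph) : Prop :=
  [\/ isomorphic H H', del_isolated_vertex H H', del_edge H H' | contract_edge H H'].

Definition minor (G H : mgraph) : Prop := clos_refl_trans mgraph minor_step H G.

(* spectator floor: min of sp H over graphs H having G as a minor.
   When G is a graph, H = G is a candidate, so the minimum is <= sp G and it
   suffices to range over k <= sp G. *)
Definition spfloor (G : mgraph) : nat :=
  \big[minn/sp G]_(k < (sp G).+1 |
        `[< exists H : mgraph, [/\ is_graph H, minor G H & sp H = k] >]) k.

Definition adj (G : mgraph) : rel (vert G) := fun x y => [exists e, incid e x y].

Definition comp (G : mgraph) (x : vert G) : {set vert G} :=
  [set y | connect (@adj G) x y].

Definition components (G : mgraph) : {set {set vert G}} :=
  [set comp x | x : vert G].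

Section Induced.
Variables (G : mgraph) (C : {set vert G}).
Definition ind_vert := {x : vert G | x \in C}.
Definition ind_edge := {e : edge G | ((ends e).1 \in C) && ((ends e).2 \in C)}.
Definition ind_ends (e : ind_edge) : ind_vert * ind_vert :=
  let h := elimT andP (valP e) in
  (exist _ (ends (val e)).1 (proj1 h), exist _ (ends (val e)).2 (proj2 h)).
Definition induced : mgraph := @MGraph {x : vert G | x \in C} {e : edge G | ((ends e).1 \in C) && ((ends e).2 \in C)} ind_ends.
End Induced.

(* Lower bound: let P be a unique shortest path of a graph H with usp H vertices.
   For any vertex set X of H, P is still a unique shortest path of H[X u P], so
   the spectator floor of H[X] is at most |X \ P|; over a family of disjoint sets
   these bounds add up to at most sp H.  This bound on disjoint families survives
   every minor step, since a step is undone on vertex sets (by the image under an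
   embedding, by the preimage under a contraction) by a map that keeps disjoint
   sets disjoint and does not decrease the spectator floor of induced subgraphs.
   Taking H optimal for G and the family of components of G gives the lower bound.

   Upper bound: for disjoint unions of components A and B, take optimal graphs
   HA and HB and join them by one new edge from the last vertex of a longest
   unique shortest path of HA to the first vertex of one of HB.  Every path from
   the HA side to the HB side crosses the new edge exactly once, so the
   concatenated path is a unique shortest path of the join, whose spectator
   number is therefore at most sp HA + sp HB; and G[A u B] is a minor of it. *)

From Pilot Require Import Defs.
From mathcomp Require Import all_boot boolp zify.
From Stdlib Require Import Relation_Operators Operators_Properties.

Set Implicit Arguments.
Unset Strict Implicit.
Unset Printing Implicit Defensive.

Lemma inj_surj_bij (A B : finType) (f : A -> B) :
  injective f -> (forall y, exists x, f x = y) -> bijective f.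
Proof.
move=> fi fs; apply: (inj_card_bij fi); rewrite -(card_codom fi).
by apply/subset_leq_card/subsetP => y _; case: (fs y) => x <-; apply: codom_f.
Qed.

Lemma sig_lift_seq (T : Type) (P : pred T) (s : seq T) :
  all P s -> exists s' : seq {x | P x}, map val s' = s.
Proof.
elim: s => [|x s IH] /=; first by exists [::].
by case/andP=> Px /IH[s' <-]; exists (exist _ x Px :: s').
Qed.

Lemma uniq_map_inl_inr (A B : eqType) (s1 : seq A) (s2 : seq B) :
  uniq (map inl s1 ++ map inr s2 : seq (A + B)) = uniq s1 && uniq s2.
Proof.
rewrite cat_uniq !map_inj_uniq; try by move=> ? ? [].
have -> // : has (mem (map inl s1)) (map inr s2 : seq (A + B)) = false.
by apply/hasPn => _ /mapP[y _ ->]; apply/mapP => -[].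
Qed.

Definition sum_lmap (A A' B : Type) (f : A -> A') (v : A + B) : A' + B :=
  match v with inl x => inl (f x) | inr y => inr y end.

Lemma sum_lmap_inj (A A' B : Type) (f : A -> A') :
  injective f -> injective (@sum_lmap A A' B f).
Proof. by move=> fi [a|a] [b|b] //= [] => [/fi|] ->. Qed.

Definition sum_swap (A B : Type) (v : A + B) : B + A :=
  match v with inl x => inr x | inr y => inl y end.

Lemma sum_swap_inj (A B : Type) : injective (@sum_swap A B).
Proof. by move=> [a|a] [b|b] //= [] ->. Qed.

Lemma bigminn_le_idx (I : finType) (P : pred I) (F : I -> nat) x :
  \big[minn/x]_(i | P i) F i <= x.
Proof. by elim/big_rec: _ => // i y _; apply: leq_trans (geq_minr _ _). Qed.

Lemma bigminn_le (I : finType) (P : pred I) (F : I -> nat) x j :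
  P j -> \big[minn/x]_(i | P i) F i <= F j.
Proof.
move=> Pj; rewrite -big_filter.
have : j \in filter P (index_enum I) by rewrite mem_filter Pj mem_index_enum.
elim: (filter P _) => //= i r IH; rewrite big_cons inE => /predU1P[->|/IH].
  exact: geq_minl.
exact: leq_trans (geq_minr _ _).
Qed.

Lemma bigminn_attained (I : finType) (P : pred I) (F : I -> nat) x :
  \big[minn/x]_(i | P i) F i = x \/ exists2 i, P i & \big[minn/x]_(i | P i) F i = F i.
Proof.
elim/big_ind: _ => [|a b Ha Hb|i Pi]; [by left| |by right; exists i].
by rewrite /minn; case: ifP.
Qed.

Lemma sum_card_setD_le (T : finType) (F : {set {set T}}) (W : {set T}) :
  trivIset F -> \sum_(X in F) #|X :\: W| <= #|T| - #|W|.
Proof.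
move=> tF; have card_setD X : #|X :\: W| = \sum_(x in X | x \notin W) 1.
  by rewrite sum1dep_card; apply: eq_card => x; rewrite !inE andbC.
rewrite (eq_bigr _ (fun X _ => card_setD X)) -big_trivIset_cond // sum1dep_card.
rewrite -(cardsC W) addKn; apply/subset_leq_card/subsetP => x.
by rewrite !inE => /andP[].
Qed.

Section Incidence.
Variable G : mgraph.
Implicit Types (e : edge G) (x y : vert G).

Lemma incid_ends e : incid e (ends e).1 (ends e).2.
Proof. by rewrite /incid -surjective_pairing eqxx. Qed.

Lemma incidC e x y : incid e x y = incid e y x.
Proof. by rewrite /incid orbC. Qed.

Lemma incidP e x y : reflect (ends e = (x, y) \/ ends e = (y, x)) (incid e x y).
Proof. by apply: (iffP orP) => -[] /eqP; [left|right|left|right]. Qed.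

Lemma incid_endsC e e' :
  incid e (ends e').1 (ends e').2 -> incid e' (ends e).1 (ends e).2.
Proof. by case/incidP => ->; [|rewrite incidC]; apply: incid_ends. Qed.

Lemma incid_eq e x y x' y' : incid e x y -> incid e x' y' ->
  (x' = x /\ y' = y) \/ (x' = y /\ y' = x).
Proof.
move=> /incidP E /incidP E'.
by case: E E' => -> [] [-> ->]; [left|right|right|left].
Qed.

Lemma loopless_ends e : loopless G -> (ends e).1 != (ends e).2.
Proof. by move/forallP. Qed.

End Incidence.

Lemma incid_induced (G : mgraph) (C : {set vert G}) (e : edge (induced C)) x y :
  incid e x y = incid (val e) (val x) (val y).
Proof. by rewrite /incid /= !xpair_eqE -!val_eqE. Qed.

Lemma card_induced (G : mgraph) (C : {set vert G}) : #|vert (induced C)| = #|C|.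
Proof. by rewrite card_sig; apply: eq_card => x; rewrite inE. Qed.

Lemma loopless_induced (G : mgraph) (C : {set vert G}) : loopless G -> loopless (induced C).
Proof. by move=> /forallP L; apply/forallP => e; rewrite -val_eqE; apply: L. Qed.

Lemma is_graph_induced (G : mgraph) (C : {set vert G}) :
  loopless G -> C != set0 -> is_graph (induced C).
Proof. by move=> L C0; rewrite /is_graph card_induced card_gt0 C0 loopless_induced. Qed.

(** * Unique shortest paths *)

Fixpoint walk (G : mgraph) (x : vert G) (vs : seq (vert G)) (es : seq (edge G)) : bool :=
  match vs, es with
  | [::], [::] => true
  | y :: vs', e :: es' => incid e x y && walk y vs' es'
  | _, _ => false
  end.

Lemma walk_size (G : mgraph) (x : vert G) vs es : walk x vs es -> size vs = size es.
Proof. by elim: vs x es => [|y vs IH] x [|e es] //= /andP[_ /IH ->]. Qed.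

Lemma walk_ends (G : mgraph) (x : vert G) vs es e : walk x vs es -> e \in es ->
  ((ends e).1 \in x :: vs) && ((ends e).2 \in x :: vs).
Proof.
elim: vs x es => [|y vs IH] x [|e' es] //= /andP[/incidP E W].
rewrite inE => /predU1P[->|/(IH _ _ W)].
  by case: E => ->; rewrite !inE !eqxx ?orbT.
by rewrite !inE => /andP[/orP[]-> /orP[]->]; rewrite ?orbT.
Qed.

Lemma uv_pathE (G : mgraph) (u v : vert G) vs es :
  is_uv_path u v vs es =
  if vs is x :: tl then [&& x == u, uniq (x :: tl), last x tl == v & walk x tl es]
  else false.
Proof.
rewrite /is_uv_path; case: vs => [|x tl] //=.
have -> : all2 (fun e p => incid e p.1 p.2) es (zip (x :: tl) tl) = walk x tl es.
  by elim: tl x es => [|y tl IH] x [|e es] //=; rewrite IH.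
case W: (walk x tl es); last by rewrite !andbF.
by rewrite (walk_size W) eqxx /= andbT andbCA.
Qed.

Lemma usp_uniq (G : mgraph) vs es : @is_usp G vs es -> uniq vs.
Proof. by case=> u [v [/and5P[]]]. Qed.

Lemma usp_nil (G : mgraph) es : ~ @is_usp G [::] es.
Proof. by case=> u [v []]; rewrite uv_pathE. Qed.

Lemma usp_cons (G : mgraph) (x : vert G) tl es : @is_usp G (x :: tl) es ->
  [/\ is_uv_path x (last x tl) (x :: tl) es,
      (forall vs' es', is_uv_path x (last x tl) vs' es' -> size tl < size vs') &
      (forall vs' es', is_uv_path x (last x tl) vs' es' -> size vs' = (size tl).+1 ->
           vs' = x :: tl /\ es' = es)].
Proof.
case=> u [v [P S U]].
by have := P; rewrite uv_pathE => /and4P[/eqP Eu _ /eqP Ev _]; subst u v; split.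
Qed.

Lemma usp_single (G : mgraph) (x : vert G) : is_usp [:: x] [::].
Proof.
exists x, x; split; first by rewrite uv_pathE /= eqxx.
- by move=> [|y tl] es; rewrite uv_pathE.
- move=> [|y tl] es; rewrite uv_pathE // => /and4P[/eqP -> _ _ W] /= [Etl].
  by case: tl Etl W => // _; case: es.
Qed.

Lemma usp_le (G : mgraph) vs es : @is_usp G vs es -> size vs <= usp G.
Proof.
move=> U; have lt_vs : size vs < #|vert G|.+1.
  by rewrite ltnS -(card_uniqP (usp_uniq U)) max_card.
apply: (@leq_bigmax_cond _ _ (fun k : 'I__ => nat_of_ord k) (Ordinal lt_vs)).
by apply/asboolP; exists vs, es.
Qed.

Lemma usp_le_card (G : mgraph) : usp G <= #|vert G|.
Proof. by apply/bigmax_leqP => i _; rewrite -ltnS. Qed.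

Lemma usp_attained (G : mgraph) : 0 < #|vert G| ->
  exists vs es, @is_usp G vs es /\ size vs = usp G.
Proof.
case/card_gt0P => x _.
have lt_1 : 1 < #|vert G|.+1 by rewrite ltnS; apply/card_gt0P; exists x.
pose P (k : 'I_#|vert G|.+1) := `[< exists vs es, @is_usp G vs es /\ size vs = k >].
have : 0 < #|P|.
  apply/card_gt0P; exists (Ordinal lt_1); apply/asboolP.
  by exists [:: x], [::]; split => //; apply: usp_single.
case/(eq_bigmax_cond (fun k : 'I__ => nat_of_ord k)) => k /asboolP[vs [es [U Ek]]] Emax.
by exists vs, es; rewrite Ek /usp -Emax.
Qed.

(** * Minors *)

Definition embedding (M N : mgraph) (f : vert M -> vert N) (g : edge M -> edge N) :=
  [/\ injective f, injective g & compat f g].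

Section Embedding.
Variables (M N : mgraph) (f : vert M -> vert N) (g : edge M -> edge N).

Lemma compat_ends_imset (A : {set vert M}) e : compat f g ->
  (ends e).1 \in A -> (ends e).2 \in A ->
  ((ends (g e)).1 \in f @: A) && ((ends (g e)).2 \in f @: A).
Proof. by move=> /(_ e) /incidP[]-> A1 A2; rewrite /= !imset_f. Qed.

Hypothesis emb : embedding f g.

Lemma incid_embedding e x y : incid (g e) (f x) (f y) = incid e x y.
Proof.
case: emb => fi _ /(_ e) /incidP E; rewrite /incid [ends e]surjective_pairing.
by case: E => ->; rewrite !xpair_eqE !(inj_eq fi); do !case: eqP.
Qed.

Lemma walk_embedding x vs es : walk (f x) (map f vs) (map g es) = walk x vs es.
Proof.
by elim: vs x es => [|y vs IH] x [|e es] //=; rewrite IH incid_embedding.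
Qed.

Lemma uv_path_embedding u v vs es :
  is_uv_path (f u) (f v) (map f vs) (map g es) = is_uv_path u v vs es.
Proof.
case: emb => fi _ _; case: vs => [|x tl]; rewrite !uv_pathE //=.
by rewrite !(inj_eq fi) (map_inj_uniq fi) /= (mem_map fi) last_map (inj_eq fi)
  walk_embedding.
Qed.

Lemma usp_embedding vs es : is_usp (map f vs) (map g es) -> is_usp vs es.
Proof.
case: vs => [|x tl] [u [v [P S U]]]; first by rewrite uv_pathE in P.
have := P; rewrite uv_pathE /= last_map => /and4P[/eqP Eu _ /eqP Ev _]; subst u v.
exists x, (last x tl); split; first by rewrite -uv_path_embedding.
- move=> vs' es' P'; rewrite -(size_map f) -(size_map f vs').
  by apply: (S _ (map g es')); rewrite uv_path_embedding.
- move=> vs' es' P' E'; case: emb => fi gi _.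
  have [] := U (map f vs') (map g es'); rewrite ?uv_path_embedding ?size_map //.
  by move=> /(inj_map fi) -> /(inj_map gi) ->.
Qed.

End Embedding.

Lemma embedding_id (G : mgraph) : embedding (@id (vert G)) (@id (edge G)).
Proof. by split=> // e; apply: incid_ends. Qed.

Lemma embedding_val (G : mgraph) (C : {set vert G}) : embedding (M := induced C) val val.
Proof. by split=> [||e]; [apply: val_inj|apply: val_inj|apply: incid_ends]. Qed.

Lemma minor_trans (A B C : mgraph) : minor A B -> minor B C -> minor A C.
Proof. by move=> mAB mBC; apply: rt_trans mBC mAB. Qed.

Lemma minor_of_step (N N' : mgraph) : minor_step N N' -> minor N' N.
Proof. exact: rt_step. Qed.

Definition deledge (N : mgraph) (e0 : edge N) : mgraph :=
  @MGraph (vert N) {e : edge N | e != e0} (fun e => ends (val e)).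

Lemma minor_deledge (N : mgraph) (e0 : edge N) : minor (deledge e0) N.
Proof.
apply/minor_of_step/Or43; exists e0, id, val; split=> //.
- by exists id.
- exact: val_inj.
- by move=> e ne0; exists (exist _ e ne0).
- by move=> e; apply: (valP e).
- by move=> e; apply: incid_ends.
Qed.

Lemma minor_delvert (N : mgraph) (v : vert N) :
  (forall e, ((ends e).1 != v) && ((ends e).2 != v)) -> minor (induced [set~ v]) N.
Proof.
move=> v_isolated.
have ends_in e : ((ends e).1 \in [set~ v]) && ((ends e).2 \in [set~ v]).
  by rewrite !in_setC1.
apply/minor_of_step/Or42; exists v; split.
  by move=> e; apply/andP.
exists val, val; split.
- exact: val_inj.
- by move=> x; rewrite -in_setC1 => xv; exists (exist _ x xv).
- by move=> y; move: (valP y); rewrite /= in_setC1.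
- by apply: inj_surj_bij => [|e]; [apply: val_inj|exists (exist _ e (ends_in e))].
- by move=> e; apply: incid_ends.
Qed.

Lemma minor_step_cases (M M' : mgraph) : minor_step M M' ->
  (exists f g, @embedding M' M f g) \/ contract_edge M M'.
Proof.
case=> [[f [g [/bij_inj fi /bij_inj gi cp]]]|[_ [_ [f [g [fi _ _ /bij_inj gi cp]]]]]|
        [_ [f [g [/bij_inj fi gi _ _ cp]]]]|]; last by right.
all: by left; exists f, g.
Qed.

(* Delete an edge, or else a (necessarily isolated) vertex, outside the image;
   when there is none, the embedding is an isomorphism. *)
Lemma minor_of_embedding (M N : mgraph) f g : @embedding M N f g -> minor M N.
Proof.
move Es : (#|vert N| + #|edge N|) => s.
elim/ltn_ind: s N Es f g => s IH N Es f g [fi gi cp].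
case: (boolP [exists e0, [forall e', g e' != e0]]) =>
    [/existsP[e0 /forallP g_e0]|/existsPn g_surj].
  apply: minor_trans (minor_deledge e0).
  apply: (IH _ _ (deledge e0) erefl f (fun e => exist _ (g e) (g_e0 e))); last first.
    by split=> // a b [] /gi.
  have card_del : #|edge (deledge e0)| = #|edge N|.-1.
    by rewrite /= card_sig; apply: cardC1.
  have : 0 < #|edge N| by apply/card_gt0P; exists e0.
  by rewrite -Es card_del /=; lia.
have g_onto e : exists e', g e' = e.
  by have /forallPn[e' /negPn/eqP <-] := g_surj e; exists e'.
case: (boolP [exists v, [forall x, f x != v]]) =>
    [/existsP[v /forallP f_v]|/existsPn f_surj].
  have v_isolated e : ((ends e).1 != v) && ((ends e).2 != v).
    have [e' <-] := g_onto e.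
    have /andP[/imsetP[x _ ->] /imsetP[y _ ->]] :=
      compat_ends_imset cp (in_setT (ends e').1) (in_setT (ends e').2).
    by rewrite !f_v.
  apply: minor_trans (minor_delvert v_isolated).
  have f_in x : f x \in [set~ v] by rewrite in_setC1.
  have g_in e : ((ends (g e)).1 \in [set~ v]) && ((ends (g e)).2 \in [set~ v]).
    by rewrite !in_setC1 v_isolated.
  apply: (IH _ _ (induced [set~ v]) erefl (fun x => exist _ (f x) (f_in x))
            (fun e => exist _ (g e) (g_in e))); last first.
    by split=> [a b [] /fi|a b [] /gi|e] //; rewrite incid_induced; apply: cp.
  have lt_edges : #|edge (induced [set~ v])| <= #|edge N| by rewrite card_sig max_card.
  have : 0 < #|vert N| by apply/card_gt0P; exists v.
  by move: lt_edges; rewrite -Es card_induced cardsC1; lia.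
have f_onto y : exists x, f x = y.
  by have /forallPn[x /negPn/eqP <-] := f_surj y; exists x.
by apply/minor_of_step/Or41; exists f, g; split=> //; apply: inj_surj_bij.
Qed.

Lemma minor_induced_embedding (M N : mgraph) f g (X : {set vert M}) (Y : {set vert N}) :
  embedding f g -> f @: X \subset Y -> minor (induced X) (induced Y).
Proof.
move=> [fi gi cp] /subsetP sXY.
have f_in (x : vert (induced X)) : f (val x) \in Y by apply/sXY/imset_f/(valP x).
have g_in (e : edge (induced X)) :
    ((ends (g (val e))).1 \in Y) && ((ends (g (val e))).2 \in Y).
  by case/andP: (valP e) => e1 e2; case/andP: (compat_ends_imset cp e1 e2) => /sXY-> /sXY->.
pose f' : vert (induced X) -> vert (induced Y) := fun x => exist _ (f (val x)) (f_in x).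
pose g' : edge (induced X) -> edge (induced Y) := fun e => exist _ (g (val e)) (g_in e).
apply: (@minor_of_embedding _ _ f' g').
by split=> [a b [] /fi /val_inj|a b [] /gi /val_inj|e] //; rewrite incid_induced; apply: cp.
Qed.

Lemma minor_of_bij_embedding (M N : mgraph) f g :
  @embedding M N f g -> bijective f -> bijective g -> minor N M.
Proof.
move=> E [f' fK f'K] [g' gK g'K]; apply: (@minor_of_embedding _ _ f' g').
split=> [||e]; [exact: can_inj f'K | exact: can_inj g'K |].
by rewrite -(incid_embedding E) !f'K g'K incid_ends.
Qed.

Lemma loopless_compat (M' M : mgraph) f g : @compat M' M f g -> loopless M -> loopless M'.
Proof.
move=> cp L; apply/forallP => e; apply: contra (loopless_ends (g e) L) => /eqP E.
by move: (cp e); rewrite E /incid orbb => /eqP ->.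
Qed.

(** * Spectator floor and the lower bound *)

Lemma spfloor_le_sp (A : mgraph) : spfloor A <= sp A.
Proof. exact: bigminn_le_idx. Qed.

Lemma spfloor_le (A H : mgraph) : is_graph H -> minor A H -> spfloor A <= sp H.
Proof.
move=> gH mAH; have [lt_HA|] := ltnP (sp H) (sp A).+1; last first.
  by move/ltnW; apply: leq_trans (spfloor_le_sp A).
apply: (@bigminn_le _ _ (fun k : 'I__ => nat_of_ord k) _ (Ordinal lt_HA)).
by apply/asboolP; exists H.
Qed.

Lemma spfloor_witness (A : mgraph) : is_graph A ->
  exists H, [/\ is_graph H, minor A H & sp H = spfloor A].
Proof.
move=> gA; rewrite /spfloor.
have [->|[k /asboolP Pk ->]] := bigminn_attained
  (fun k : 'I_(sp A).+1 => `[< exists H, [/\ is_graph H, minor A H & sp H = k] >])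
  (fun k => nat_of_ord k) (sp A); last exact: Pk.
by exists A; split=> //; apply: rt_refl.
Qed.

Lemma spfloor_mono (A B : mgraph) : is_graph B -> minor A B -> spfloor A <= spfloor B.
Proof.
move=> gB mAB; have [H [gH mBH <-]] := spfloor_witness gB.
exact: spfloor_le gH (minor_trans mAB mBH).
Qed.

Lemma spfloor_induced0 (G : mgraph) : spfloor (induced (set0 : {set vert G})) = 0.
Proof.
apply/eqP; rewrite -leqn0; apply: leq_trans (spfloor_le_sp _) _.
by rewrite /sp card_induced cards0.
Qed.

Lemma spfloor_induced_le_setD (H : mgraph) vs es (X : {set vert H}) :
  loopless H -> is_usp vs es -> spfloor (induced X) <= #|X :\: [set x in vs]|.
Proof.
case: vs => [|x tl] L U; first by case: (usp_nil U).
have [/[dup] P /and5P[_ uniq_vs _ _ _] _ _] := usp_cons U.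
move: P; rewrite uv_pathE => /and4P[_ _ _ W].
set Vs := [set y in x :: tl]; set Y := X :|: Vs.
have vs_in : all (fun y => y \in Y) (x :: tl).
  by apply/allP => y ys; rewrite in_setU in_set ys orbT.
have es_in : all (fun e => ((ends e).1 \in Y) && ((ends e).2 \in Y)) es.
  by apply/allP => e /(walk_ends W) /andP[e1 e2]; rewrite !in_setU !in_set e1 e2 !orbT.
have [vs' Evs] := sig_lift_seq vs_in; have [es' Ees] := sig_lift_seq es_in.
have U' : is_usp (G := induced Y) vs' es'.
  by apply: (usp_embedding (embedding_val Y)); rewrite Evs Ees.
have gY : is_graph (induced Y).
  apply: is_graph_induced L _; apply/set0Pn; exists x.
  by rewrite in_setU in_set mem_head orbT.
have mXY : minor (induced X) (induced Y).
  by apply: minor_induced_embedding (embedding_id H) _; rewrite imset_id subsetUl.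
apply: leq_trans (spfloor_le gY mXY) _.
have := usp_le U'; rewrite /sp card_induced -(size_map val) Evs.
have -> : size (x :: tl) = #|Vs| by rewrite cardsE (card_uniqP uniq_vs).
by rewrite /Y; have := cardsUI X Vs; have := cardsID Vs X; lia.
Qed.

(* [phi] undoes the minor step from [M] to [M'] on vertex sets. *)
Definition spfloor_transfer (M M' : mgraph) (phi : {set vert M'} -> {set vert M}) :=
  [/\ injective phi,
      forall A B : {set vert M'}, [disjoint A & B] -> [disjoint phi A & phi B] &
      forall X, spfloor (induced X) <= spfloor (induced (phi X))].

Lemma embedding_transfer (M' M : mgraph) f g : @embedding M' M f g -> loopless M ->
  spfloor_transfer (fun X => f @: X).
Proof.
move=> E L; have [fi _ _] := E; split.
- exact: imset_inj.
- move=> A B; rewrite -!setI_eq0 -imsetI => [/eqP->|x y _ _ /fi //].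
  by rewrite imset0.
- move=> X; have [->|X0] := eqVneq X set0; first by rewrite spfloor_induced0.
  apply: spfloor_mono (minor_induced_embedding E (subxx _)).
  by apply: is_graph_induced L _; rewrite imset_eq0.
Qed.

Section Contraction.
Variables (M M' : mgraph) (e0 : edge M) (f : vert M -> vert M') (g : edge M' -> edge M).
Hypothesis e0_simple : forall e, e != e0 -> ~~ incid e (ends e0).1 (ends e0).2.
Hypothesis f_onto : forall y, exists x, f x = y.
Hypothesis f_eq : forall x y, f x = f y <-> (x = y \/ incid e0 x y).
Hypothesis g_inj : injective g.
Hypothesis g_onto : forall e, e != e0 -> exists e', g e' = e.
Hypothesis g_ne0 : forall e', g e' != e0.
Hypothesis g_incid : forall e', incid e' (f (ends (g e')).1) (f (ends (g e')).2).

Lemma loopless_contract : loopless M -> loopless M'.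
Proof.
move=> L; apply/forallP => e'; apply/negP => /eqP E.
have /f_eq[E'|] : f (ends (g e')).1 = f (ends (g e')).2.
  by case/incidP: (g_incid e') E => -> //= /esym.
- by move: (loopless_ends (g e') L); rewrite E' eqxx.
- by move/incid_endsC; apply/negP/e0_simple/g_ne0.
Qed.

Section Preimage.
Variable X : {set vert M'}.
Let P := f @^-1: X.

Lemma g_in_preim (e : edge (induced X)) :
  ((ends (g (val e))).1 \in P) && ((ends (g (val e))).2 \in P).
Proof.
by case/andP: (valP e); case/incidP: (g_incid (val e)) => -> /=; rewrite !inE => -> ->.
Qed.

Let g' (e : edge (induced X)) : edge (induced P) := exist _ (g (val e)) (g_in_preim e).

Lemma contract_induced_preim : (ends e0).1 \in P -> contract_edge (induced P) (induced X).
Proof.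
move=> e0_in; have f_e0 : f (ends e0).1 = f (ends e0).2.
  by apply/f_eq; right; apply: incid_ends.
have e0_in' : ((ends e0).1 \in P) && ((ends e0).2 \in P).
  by move: e0_in; rewrite !inE -f_e0 => ->.
have f_in (x : vert (induced P)) : f (val x) \in X by have := valP x; rewrite inE.
exists (exist _ e0 e0_in'); split.
  by move=> e; rewrite -val_eqE incid_induced; apply: e0_simple.
exists (fun x => exist _ (f (val x)) (f_in x)), g'; split.
- move=> y; have [x Ex] := f_onto (val y).
  have x_in : x \in P by rewrite inE Ex (valP y).
  by exists (exist _ x x_in); apply: val_inj.
- move=> x y; rewrite incid_induced; split.
    by move=> [] /f_eq[/val_inj|]; [left|right].
  by case=> [->|E] //; apply: val_inj; apply/f_eq; right.
- by move=> a b [] /g_inj /val_inj.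
- split; last by move=> e; rewrite -val_eqE; apply: g_ne0.
  move=> e; rewrite -val_eqE => /g_onto[e' Ee].
  have e'_in : ((ends e').1 \in X) && ((ends e').2 \in X).
    case/andP: (valP e); rewrite -Ee !inE.
    by case/incidP: (g_incid e') => -> /= -> ->.
  by exists (exist _ e' e'_in); apply: val_inj.
- by move=> e; rewrite incid_induced; apply: g_incid.
Qed.

(* If the contracted edge does not lie in the preimage, then f is injective on
   it and the preimage is a copy of [induced X]. *)
Lemma embedding_induced_preim : (ends e0).1 \notin P ->
  exists h : vert (induced X) -> vert (induced P), embedding h g'.
Proof.
move=> e0_out; have f_inj : {in P &, injective f}.
  move=> x y x_in y_in /f_eq[//|/incidP E]; case/negP: e0_out.
  by case: E => ->.
have y_img (y : vert (induced X)) : val y \in image f P.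
  by have [x Ex] := f_onto (val y); apply/imageP; exists x; rewrite // inE Ex (valP y).
pose h y : vert (induced P) := exist _ (iinv (y_img y)) (mem_iinv (y_img y)).
have f_h y : f (val (h y)) = val y by apply: f_iinv.
exists h; split.
- by move=> a b /(congr1 (fun x => f (val x))); rewrite !f_h; apply: val_inj.
- by move=> a b [] /g_inj /val_inj.
move=> e; rewrite incid_induced.
have /andP[p_in q_in] := g_in_preim e.
have [a_in b_in] := (valP (h (ends e).1), valP (h (ends e).2)).
have incid_fab : incid (val e) (f (val (h (ends e).1))) (f (val (h (ends e).2))).
  by rewrite !f_h -incid_induced incid_ends.
have [[/(f_inj _ _ p_in a_in) <- /(f_inj _ _ q_in b_in) <-]|
      [/(f_inj _ _ p_in b_in) <- /(f_inj _ _ q_in a_in) <-]] :=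
  incid_eq incid_fab (g_incid (val e)); last rewrite incidC; exact: incid_ends.
Qed.

Lemma minor_induced_preim : minor (induced X) (induced P).
Proof.
have [e0_in|e0_out] := boolP ((ends e0).1 \in P).
  exact/minor_of_step/Or44/contract_induced_preim.
by have [h /minor_of_embedding] := embedding_induced_preim e0_out.
Qed.

End Preimage.

Lemma contract_transfer : loopless M -> spfloor_transfer (fun X => f @^-1: X).
Proof.
move=> L; split.
- move=> A B /setP E; apply/setP => y; have [x <-] := f_onto y.
  by have := E x; rewrite !inE.
- by move=> A B; rewrite -!setI_eq0 -preimsetI => /eqP ->; rewrite preimset0.
- move=> X; have [->|/set0Pn[y y_in]] := eqVneq X set0; first by rewrite spfloor_induced0.
  apply: spfloor_mono (minor_induced_preim X); apply: is_graph_induced L _.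
  by have [x Ex] := f_onto y; apply/set0Pn; exists x; rewrite inE Ex.
Qed.

End Contraction.

Lemma minor_step_transfer (M M' : mgraph) : minor_step M M' -> loopless M ->
  loopless M' /\ exists phi, @spfloor_transfer M M' phi.
Proof.
move=> st L; have [[f [g E]]|] := minor_step_cases st.
  split; first by case: E => _ _ /loopless_compat; apply.
  by exists (fun X : {set _} => f @: X); apply: (embedding_transfer E).
case=> e0 [e0_simple [f [g [f_onto f_eq g_inj [g_onto g_ne0] g_incid]]]].
split; first exact: (loopless_contract e0_simple f_eq g_ne0 g_incid).
by exists (fun X : {set _} => f @^-1: X);
  apply: (contract_transfer e0_simple f_onto f_eq g_inj g_onto g_ne0 g_incid L).
Qed.

Definition spfloor_packing_le (s : nat) (M : mgraph) := loopless M /\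
  forall F : {set {set vert M}}, trivIset F -> \sum_(X in F) spfloor (induced X) <= s.

Lemma spfloor_packing_le_sp (H : mgraph) : is_graph H -> spfloor_packing_le (sp H) H.
Proof.
case/andP=> H0 L; split=> // F tF.
have [vs [es [U Es]]] := usp_attained H0.
apply: (@leq_trans (\sum_(X in F) #|X :\: [set x in vs]|)).
  by apply: leq_sum => X _; apply: spfloor_induced_le_setD L U.
apply: leq_trans (sum_card_setD_le _ tF) _.
by rewrite /sp -Es cardsE (card_uniqP (usp_uniq U)).
Qed.

Lemma spfloor_packing_le_step (s : nat) (M M' : mgraph) :
  minor_step M M' -> spfloor_packing_le s M -> spfloor_packing_le s M'.
Proof.
move=> st [L packM]; have [L' [phi [phi_inj phi_disj phi_le]]] := minor_step_transfer st L.
split=> // F tF; apply: (@leq_trans (\sum_(X in F) spfloor (induced (phi X)))).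
  by apply: leq_sum => X _; apply: phi_le.
rewrite -(big_imset (fun X => spfloor (induced X)) (in2W phi_inj)); apply: packM.
move/trivIsetP: tF => tF.
apply/trivIsetP => _ _ /imsetP[A A_in ->] /imsetP[B B_in ->] neq_AB.
by apply/phi_disj/tF => //; apply: contraNneq neq_AB => ->.
Qed.

Lemma sum_spfloor_le_sp (G H : mgraph) (F : {set {set vert G}}) :
  is_graph H -> minor G H -> trivIset F -> \sum_(X in F) spfloor (induced X) <= sp H.
Proof.
move=> gH mGH tF; suff [_] : spfloor_packing_le (sp H) G by apply.
move: (spfloor_packing_le_sp gH); move: (sp H) => s.
elim: (clos_rt_rt1n _ _ _ _ mGH) => // M M' M'' st _ IH packM.
exact/IH/(spfloor_packing_le_step st).
Qed.

(** * Disjoint sums and joins *)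

Section DisjointSum.
Variables M N : mgraph.

Definition sum_ends (e : edge M + edge N) : (vert M + vert N) * (vert M + vert N) :=
  match e with
  | inl e => (inl (ends e).1, inl (ends e).2)
  | inr e => (inr (ends e).1, inr (ends e).2)
  end.

Definition gsum : mgraph := @MGraph (vert M + vert N)%type (edge M + edge N)%type sum_ends.

Lemma incid_gsum_inl (e : edge M) (u w : vert gsum) :
  incid (inl e : edge gsum) u w =
  if (u, w) is (inl x, inl y) then incid e x y else false.
Proof.
by case: u w => x [] y;
  rewrite /incid /= [ends e]surjective_pairing !xpair_eqE -!sum_eqE /= ?andbF.
Qed.

Lemma incid_gsum_inr (e : edge N) (u w : vert gsum) :
  incid (inr e : edge gsum) u w =
  if (u, w) is (inr x, inr y) then incid e x y else false.
Proof.
by case: u w => x [] y;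
  rewrite /incid /= [ends e]surjective_pairing !xpair_eqE -!sum_eqE /= ?andbF.
Qed.

End DisjointSum.

Lemma embedding_suml (M' M N : mgraph) f g : @embedding M' M f g ->
  @embedding (gsum M' N) (gsum M N) (sum_lmap f) (sum_lmap g).
Proof.
case=> fi gi cp; split; try exact: sum_lmap_inj.
by case=> e; rewrite /= ?incid_gsum_inl ?incid_gsum_inr ?cp ?incid_ends.
Qed.

Lemma contract_suml (M M' N : mgraph) :
  contract_edge M M' -> contract_edge (gsum M N) (gsum M' N).
Proof.
case=> e0 [e0_simple [f [g [f_onto f_eq g_inj [g_onto g_ne0] g_incid]]]].
exists (inl e0); split.
  by case=> e //= ne0; rewrite incid_gsum_inl e0_simple //; apply: contra ne0 => /eqP ->.
exists (sum_lmap f), (sum_lmap g); split.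
- by case=> y; [have [x <-] := f_onto y; exists (inl x) | exists (inr y)].
- case=> x [] y; rewrite /= ?incid_gsum_inl.
  + split=> [[/f_eq[->|E]]|[[->]|E]] //; [by left | by right |].
    by congr inl; apply/f_eq; right.
  + by split=> // -[].
  + by split=> // -[].
  + by split=> [[->]|[[->]|]] //; left.
- exact: sum_lmap_inj.
- split.
    case=> e ne0; last by exists (inr e).
    have [|e' <-] := g_onto e; first by apply: contra ne0 => /eqP ->.
    by exists (inl e').
  by case=> e' //=; apply: contra (g_ne0 e') => /eqP [] ->.
- by case=> e'; rewrite /= ?incid_gsum_inl ?incid_gsum_inr ?g_incid ?incid_ends.
Qed.

Lemma minor_suml (M' M N : mgraph) : minor M' M -> minor (gsum M' N) (gsum M N).
Proof.
move=> mM; elim: (clos_rt_rt1n _ _ _ _ mM) => [? | A B C st _ IH]; first exact: rt_refl.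
apply: minor_trans IH _; have [[f [g E]]|C_AB] := minor_step_cases st.
  exact: minor_of_embedding (embedding_suml N E).
exact/minor_of_step/Or44/contract_suml.
Qed.

Lemma minor_gsumC (M N : mgraph) : minor (gsum M N) (gsum N M).
Proof.
apply: (@minor_of_embedding (gsum M N) (gsum N M) (@sum_swap _ _) (@sum_swap _ _)).
split; try exact: sum_swap_inj.
by case=> e; rewrite /= ?incid_gsum_inl ?incid_gsum_inr incid_ends.
Qed.

Lemma minor_gsum (A B HA HB : mgraph) :
  minor A HA -> minor B HB -> minor (gsum A B) (gsum HA HB).
Proof.
move=> mA mB; apply: minor_trans (minor_suml B mA) _.
apply: minor_trans (minor_gsumC _ _) _; apply: minor_trans (minor_suml HA mB) _.
exact: minor_gsumC.
Qed.

Section Join.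
Variables (M N : mgraph) (a : vert M) (b : vert N).

Definition join_ends (e : option (edge (gsum M N))) : vert (gsum M N) * vert (gsum M N) :=
  if e is Some e then ends e else (inl a, inr b).

Definition gjoin : mgraph :=
  @MGraph (vert M + vert N)%type (option (edge M + edge N)) join_ends.

Definition join_es (esA : seq (edge M)) (esB : seq (edge N)) :
    seq (option (edge M + edge N)) :=
  map (fun e => Some (inl e)) esA ++ None :: map (fun e => Some (inr e)) esB.

Lemma incid_join_Some (e : edge (gsum M N)) (u w : vert gjoin) :
  incid (Some e : edge gjoin) u w = incid e u w.
Proof. by []. Qed.

Lemma incid_join_None (u w : vert gjoin) :
  incid (None : edge gjoin) u w =
  ((u == inl a) && (w == inr b)) || ((u == inr b) && (w == inl a)).
Proof.
rewrite /incid /= !xpair_eqE !(eq_sym (inl a)) !(eq_sym (inr b)).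
by rewrite [(w == _) && _]andbC.
Qed.

Lemma is_graph_join : loopless M -> loopless N -> is_graph gjoin.
Proof.
move=> LM LN; apply/andP; split; first by apply/card_gt0P; exists (inl a).
by apply/forallP => -[[e|e]|] //=; apply: loopless_ends.
Qed.

Lemma minor_gsum_join : minor (gsum M N) gjoin.
Proof.
apply: (@minor_of_embedding (gsum M N) gjoin (fun v => v) (fun e => Some e)).
by split=> [||e] //; [move=> ? ? [] | apply: incid_ends].
Qed.

Lemma walk_join_inr (c : vert N) tl es :
  walk (G := gjoin) (inr c) (map inr tl) (map (fun e => Some (inr e)) es) = walk c tl es.
Proof.
by elim: tl c es => [|y tl IH] c [|e es] //=; rewrite IH incid_join_Some incid_gsum_inr.
Qed.

Lemma walk_join (x : vert M) tlA esA tlB esB :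
  walk x tlA esA -> last x tlA = a -> walk b tlB esB ->
  walk (G := gjoin) (inl x) (map inl tlA ++ inr b :: map inr tlB) (join_es esA esB).
Proof.
elim: tlA x esA => [|y tl IH] x [|e es] //=.
  by move=> _ -> WB; rewrite walk_join_inr WB incid_join_None !eqxx.
by case/andP=> I W L WB; rewrite incid_join_Some incid_gsum_inl I IH.
Qed.


Lemma walk_join_inrP (c : vert N) tl es : walk (G := gjoin) (inr c) tl es ->
  inl a \notin tl ->
  exists tlB esB,
    [/\ tl = map inr tlB, es = map (fun e => Some (inr e)) esB & walk c tlB esB].
Proof.
elim: tl c es => [|y tl IH] c [|[[e|e]|] es] //=; first by exists [::], [::].
- by rewrite incid_join_Some incid_gsum_inl.
- rewrite incid_join_Some incid_gsum_inr inE negb_or.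
  case: y => // d /andP[I W] /andP[_ a_out].
  have [tlB [esB [-> -> WB]]] := IH d es W a_out.
  by exists (d :: tlB), (e :: esB); rewrite /= I WB.
- by rewrite incid_join_None inE /= => /andP[/andP[_ /eqP->]]; rewrite eqxx.
Qed.

(* A path starting on the [M] side reaches the [N] side only through the new
   edge, and cannot come back, as that would revisit [inl a]. *)
Lemma walk_join_inlP (x : vert M) tl es (z : vert N) :
  walk (G := gjoin) (inl x) tl es -> uniq (inl x :: tl) -> last (inl x) tl = inr z ->
  exists tlA esA tlB esB,
    [/\ tl = map inl tlA ++ inr b :: map inr tlB, es = join_es esA esB,
        walk x tlA esA, last x tlA = a & walk b tlB esB /\ last b tlB = z].
Proof.
elim: tl x es => [|y tl IH] x [|[[e|e]|] es] //= /andP[I W] /andP[x_out U] L.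
- rewrite incid_join_Some incid_gsum_inl in I; case: y I W x_out U L => // y I W _ U L.
  have [tlA [esA [tlB [esB [-> -> WA LA WB]]]]] := IH y es W U L.
  by exists (y :: tlA), (e :: esA), tlB, esB; rewrite /= I WA.
- by rewrite incid_join_Some incid_gsum_inr in I.
- case: y I W x_out U L => y; rewrite incid_join_None -!sum_eqE /= ?andbF ?orbF //.
  move=> /andP[/eqP-> /eqP->] W x_out _ L.
  have a_out : inl a \notin tl by apply: contra x_out => a_in; rewrite inE a_in orbT.
  have [tlB [esB [Etl -> WB]]] := walk_join_inrP W a_out.
  exists [::], [::], tlB, esB; split=> //; first by rewrite Etl.
  by split=> //; move: L; rewrite Etl last_map => -[].
Qed.


Lemma uv_path_join (xA : vert M) (zB : vert N) vsA esA vsB esB :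
  is_uv_path xA a vsA esA -> is_uv_path b zB vsB esB ->
  is_uv_path (G := gjoin) (inl xA) (inr zB) (map inl vsA ++ map inr vsB) (join_es esA esB).
Proof.
case: vsA => [|x tlA]; rewrite uv_pathE // => /and4P[/eqP-> UA /eqP LA WA].
case: vsB => [|y tlB]; rewrite uv_pathE // => /and4P[/eqP-> UB /eqP LB WB].
have U : uniq (map inl (xA :: tlA) ++ map inr (b :: tlB)) by rewrite uniq_map_inl_inr UA UB.
rewrite uv_pathE /=; apply/and4P; split=> //.
  by rewrite last_cat /= last_map LB.
exact: walk_join.
Qed.

Lemma uv_path_joinP (xA : vert M) (zB : vert N) vs es :
  is_uv_path (G := gjoin) (inl xA) (inr zB) vs es ->
  exists vsA esA vsB esB,
    [/\ vs = map inl vsA ++ map inr vsB, es = join_es esA esB,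
        is_uv_path xA a vsA esA & is_uv_path b zB vsB esB].
Proof.
case: vs => [|y tl]; rewrite uv_pathE // => /and4P[/eqP-> U /eqP L W].
have [tlA [esA [tlB [esB [Etl -> WA LA [WB LB]]]]]] := walk_join_inlP W U L.
move: U; rewrite Etl.
rewrite -[inl xA :: _]/(map inl (xA :: tlA) ++ map inr (b :: tlB)) uniq_map_inl_inr.
case/andP=> UA UB; exists (xA :: tlA), esA, (b :: tlB), esB.
by rewrite !uv_pathE !eqxx UA UB LA LB !eqxx WA WB.
Qed.

End Join.

Lemma usp_join (M N : mgraph) (xA : vert M) tlA esA (xB : vert N) tlB esB :
  is_usp (xA :: tlA) esA -> is_usp (xB :: tlB) esB ->
  is_usp (G := gjoin (last xA tlA) xB)
    (map inl (xA :: tlA) ++ map inr (xB :: tlB)) (join_es esA esB).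
Proof.
move=> /usp_cons[PA SA QA] /usp_cons[PB SB QB].
exists (inl xA), (inr (last xB tlB)); split; first exact: uv_path_join.
- move=> vs es /uv_path_joinP[vsA [esA' [vsB [esB' [-> _ PA' PB']]]]].
  by rewrite !size_cat !size_map; apply: leq_add; [apply: SA PA' | apply: SB PB'].
- move=> vs es /uv_path_joinP[vsA [esA' [vsB [esB' [-> -> PA' PB']]]]].
  rewrite !size_cat !size_map /= => Es.
  have [EA EB] : size vsA = (size tlA).+1 /\ size vsB = (size tlB).+1.
    by have := SA _ _ PA'; have := SB _ _ PB'; lia.
  by have [-> ->] := QA _ _ PA' EA; have [-> ->] := QB _ _ PB' EB.
Qed.

(** * Components and the upper bound *)

Definition edge_closed (G : mgraph) (A : {set vert G}) :=
  forall e : edge G, ((ends e).1 \in A) = ((ends e).2 \in A).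

Section Components.
Variable G : mgraph.

Lemma adj_sym : symmetric (@adj G).
Proof. by move=> x y; apply/existsP/existsP => -[e]; exists e; rewrite incidC. Qed.

Lemma mem_comp (x : vert G) : x \in Defs.comp x.
Proof. by rewrite inE connect0. Qed.

Lemma comp_connect (x y : vert G) : connect (@adj G) x y -> Defs.comp x = Defs.comp y.
Proof.
move=> cxy; apply/setP => z; rewrite !inE; apply/idP/idP; last exact: connect_trans.
by apply: connect_trans; rewrite (sym_connect_sym adj_sym).
Qed.

Lemma trivIset_components : trivIset (components G).
Proof.
apply/trivIsetP => _ _ /imsetP[x _ ->] /imsetP[y _ ->]; apply: contraNT.
rewrite -setI_eq0 => /set0Pn[z]; rewrite !inE => /andP[/comp_connect-> /comp_connect->].
by [].
Qed.

Lemma cover_components : cover (components G) = setT.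
Proof.
apply/setP => x; rewrite inE; apply/bigcupP.
by exists (Defs.comp x); [apply: imset_f | apply: mem_comp].
Qed.

Lemma edge_closed_components C : C \in components G -> edge_closed C.
Proof.
case/imsetP=> x _ -> e; rewrite !inE.
have adj_e : adj (ends e).1 (ends e).2 by apply/existsP; exists e; apply: incid_ends.
by apply/idP/idP => cx; apply: connect_trans cx (connect1 _); rewrite // adj_sym.
Qed.

End Components.

Lemma minor_induced_union (G : mgraph) (A B : {set vert G}) :
  [disjoint A & B] -> edge_closed A -> edge_closed B ->
  minor (induced (A :|: B)) (gsum (induced A) (induced B)).
Proof.
move=> dAB cA cB; have AB_excl x : x \in A -> x \in B -> False.
  by move=> xA; rewrite (disjointFr dAB xA).
have vA (x : vert (induced A)) : val x \in A :|: B by rewrite in_setU (valP x).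
have vB (x : vert (induced B)) : val x \in A :|: B by rewrite in_setU (valP x) orbT.
have eA (e : edge (induced A)) :
    ((ends (val e)).1 \in A :|: B) && ((ends (val e)).2 \in A :|: B).
  by case/andP: (valP e) => e1 e2; rewrite !in_setU e1 e2.
have eB (e : edge (induced B)) :
    ((ends (val e)).1 \in A :|: B) && ((ends (val e)).2 \in A :|: B).
  by case/andP: (valP e) => e1 e2; rewrite !in_setU e1 e2 !orbT.
pose h (v : vert (gsum (induced A) (induced B))) : vert (induced (A :|: B)) :=
  match v with inl x => exist _ (val x) (vA x) | inr y => exist _ (val y) (vB y) end.
pose k (e : edge (gsum (induced A) (induced B))) : edge (induced (A :|: B)) :=
  match e with inl e => exist _ (val e) (eA e) | inr e => exist _ (val e) (eB e) end.
have h_inj : injective h.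
  case=> x [] y /(congr1 val) /= Exy; try congr (_ _); try exact: val_inj.
    by move: (valP x) (valP y) => /= xA; rewrite -Exy => /(AB_excl _ xA).
  by move: (valP y) (valP x) => /= yA; rewrite Exy => /(AB_excl _ yA).
have k_inj : injective k.
  case=> x [] y /(congr1 val) /= Exy; try congr (_ _); try exact: val_inj.
    by move: (valP x) (valP y) => /= /andP[xA _]; rewrite -Exy => /andP[/(AB_excl _ xA)].
  by move: (valP y) (valP x) => /= /andP[yA _]; rewrite Exy => /andP[/(AB_excl _ yA)].
have E : embedding h k by split=> // -[] e; rewrite incid_induced; apply: incid_ends.
apply: (minor_of_bij_embedding E); apply: inj_surj_bij => // w.
  have [w_A|w_nA] := boolP (val w \in A).
    by exists (inl (exist _ (val w) w_A)); apply: val_inj.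
  have w_B : val w \in B by move: (valP w); rewrite in_setU (negbTE w_nA).
  by exists (inr (exist _ (val w) w_B)); apply: val_inj.
have [e_A|e_nA] := boolP ((ends (val w)).1 \in A).
  have e_A' : ((ends (val w)).1 \in A) && ((ends (val w)).2 \in A) by rewrite -cA e_A.
  by exists (inl (exist _ (val w) e_A')); apply: val_inj.
have e_B : (ends (val w)).1 \in B.
  by case/andP: (valP w); rewrite in_setU (negbTE e_nA).
have e_B' : ((ends (val w)).1 \in B) && ((ends (val w)).2 \in B) by rewrite -cB e_B.
by exists (inr (exist _ (val w) e_B')); apply: val_inj.
Qed.

Lemma spfloor_union_le (G : mgraph) (A B : {set vert G}) :
  loopless G -> [disjoint A & B] -> edge_closed A -> edge_closed B ->
  spfloor (induced (A :|: B)) <= spfloor (induced A) + spfloor (induced B).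
Proof.
move=> L dAB cA cB.
have [->|A0] := eqVneq A set0; first by rewrite set0U spfloor_induced0.
have [->|B0] := eqVneq B set0; first by rewrite setU0 spfloor_induced0 addn0.
have [HA [gHA mA <-]] := spfloor_witness (is_graph_induced L A0).
have [HB [gHB mB <-]] := spfloor_witness (is_graph_induced L B0).
case/andP: gHA gHB => HA0 LA /andP[HB0 LB].
have [[|xA tlA] [esA [UA EA]]] := usp_attained HA0; first by case: (usp_nil UA).
have [[|xB tlB] [esB [UB EB]]] := usp_attained HB0; first by case: (usp_nil UB).
have mJ : minor (induced (A :|: B)) (gjoin (last xA tlA) xB).
  apply: minor_trans (minor_induced_union dAB cA cB) _.
  exact: minor_trans (minor_gsum mA mB) (minor_gsum_join _ _).
apply: leq_trans (spfloor_le (is_graph_join _ _ LA LB) mJ) _.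
have := usp_le (usp_join UA UB); rewrite size_cat !size_map EA EB /sp card_sum.
by have := usp_le_card HA; have := usp_le_card HB; lia.
Qed.

Lemma edge_closed_bigcup (G : mgraph) (s : seq {set vert G}) :
  {in s, forall C, edge_closed C} -> edge_closed (\bigcup_(C <- s) C).
Proof.
move=> cs e; rewrite bigcup_seq; apply/bigcupP/bigcupP => -[C Cs e_in]; exists C => //.
  by rewrite -(cs C Cs).
by rewrite (cs C Cs).
Qed.

Lemma spfloor_bigcup_le (G : mgraph) (s : seq {set vert G}) :
  loopless G -> uniq s -> {subset s <= components G} ->
  spfloor (induced (\bigcup_(C <- s) C)) <= \sum_(C <- s) spfloor (induced C).
Proof.
move=> L; elim: s => [|C s IH] /=; first by rewrite !big_nil spfloor_induced0.
case/andP=> C_out Us sub; rewrite !big_cons.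
have C_comp : C \in components G by apply: sub; rewrite mem_head.
have s_comp : {subset s <= components G} by move=> D Ds; apply: sub; rewrite inE Ds orbT.
apply: leq_trans (leq_add (leqnn _) (IH Us s_comp)); apply: spfloor_union_le L _ _ _.
- rewrite bigcup_seq; apply/bigcup_disjointP => D Ds.
  move/trivIsetP: (trivIset_components G); apply=> //; first exact: s_comp.
  by apply: contraNneq C_out => ->.
- exact: edge_closed_components.
- by apply: edge_closed_bigcup => D /s_comp; apply: edge_closed_components.
Qed.

Lemma spfloor_le_sum_components (G : mgraph) : is_graph G ->
  spfloor G <= \sum_(C in components G) spfloor (induced C).
Proof.
case/andP=> G0 L.
have mG : minor G (induced [set: vert G]).
  apply: (minor_of_bij_embedding (embedding_val _));
    apply: inj_surj_bij; try exact: val_inj.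
  - by move=> x; exists (exist _ x (in_setT x)).
  - by move=> e; exists (exist _ e (introT andP (conj (in_setT _) (in_setT _)))).
have gT : is_graph (induced [set: vert G]).
  by apply: is_graph_induced L _; rewrite -card_gt0 cardsT.
apply: leq_trans (spfloor_mono gT mG) _.
rewrite -cover_components /cover -!big_enum /=.
by apply: spfloor_bigcup_le L (enum_uniq _) _ => C; rewrite mem_enum.
Qed.

Lemma sum_components_le_spfloor (G : mgraph) : is_graph G ->
  \sum_(C in components G) spfloor (induced C) <= spfloor G.
Proof.
move=> gG; have [H [gH mGH <-]] := spfloor_witness gG.
exact: sum_spfloor_le_sp gH mGH (trivIset_components G).
Qed.

Theorem corollary3p2 (G : mgraph) :
  is_graph G ->
  spfloor G = \sum_(C in components G) spfloor (induced C).
Proof.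
move=> gG; apply/eqP; rewrite eqn_leq.
by rewrite spfloor_le_sum_components // sum_components_le_spfloor.
Qed.
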